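(* Let $T$ be a generalized tree-like graph with parameters $n_o\ge1$, $k_c$, $\hat k_b\ge1$ and $k=n_ok_c-(n_o-1)\hat k_b$ clients, and assume $k_c>\bar k_b$, where $\bar k_b=2\hat k_b$ if $n_o\ge3$, $\bar k_b=\hat k_b$ if $n_o=2$, $\bar k_b=0$ if $n_o=1$ (equivalently: every $o_i$ has a client neighbour adjacent to no other orchestrator vertex). Let $G_{er}$ be the enhanced ring graph on the $k$ clients obtained from $T$ by applying, for $i=1,\dots,n_o$, the rule $H\mapsto\tau_{o_i}(H)-o_i$. Let $T'$ be a generalized tree-like graph with parameters $n_o$, $k_c'=k_c-1$, $\hat k_b$ (hence with $k'=k-n_o$ clients and $k'+n_o=k$ vertices in total). Then there is a bijection between the vertex sets of $T'$ and $G_{er}$ under which $G_{er}$ is obtained from $T'$ by a sequence of local complementations (namely at the orchestrator vertices $o'_1,\dots,o'_{n_o}$ of $T'$). Consequently the graph state $\ket{G_{er}}$ is local-Clifford equivalent (up to relabelling of qubits) to the $k$-qubit generalized tree-like graph state $\ket{T'}$.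
   Context: All graphs are finite, simple and undirected. For $H=(V,E)$ and $a\in V$, $N_a=\{b:\{a,b\}\in E\}$; the local complementation $\tau_a(H)$ toggles the edge $\{b,c\}$ for every pair of distinct $b,c\in N_a$; $H-a$ deletes $a$ and its incident edges. Graph state $\ket{H}=\prod_{\{a,b\}\in E}\mathrm{CZ}_{ab}\ket{+}^{\otimes|V|}$. Two graph states are local-Clifford (LC) equivalent iff their graphs are related by a sequence of local complementations. Generalized tree-like graph with parameters $n_o\ge1$, $k_c$, $\hat k_b\ge1$: vertex set $\{o_1,\dots,o_{n_o}\}\cup V_c$ (disjoint) such that (i) every edge joins some $o_i$ to a client in $V_c$; (ii) $|N_{o_i}|=k_c$ for all $i$; (iii) $|N_{o_i}\cap N_{o_{i+1}}|=\hat k_b$ for $1\le i<n_o$; (iv) $N_{o_i}\cap N_{o_j}=\emptyset$ for $|i-j|\ge2$; (v) every client is adjacent to some $o_i$. Then $|V_c|=n_ok_c-(n_o-1)\hat k_b$. *)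

From mathcomp Require Import all_boot.
Set Implicit Arguments. Unset Strict Implicit. Unset Printing Implicit Defensive.

Record graph (U : finType) := Graph { gV : {set U}; gE : {set {set U}} }.

Section Graphs.
Variable U : finType.

Definition simple_graph (G : graph U) : Prop :=
  forall e, e \in gE G -> #|e| = 2 /\ e \subset gV G.

Definition nbh (G : graph U) (a : U) : {set U} := [set b | [set a; b] \in gE G].

Definition lc (G : graph U) (a : U) : graph U :=
  let T := [set [set b; c] | b in nbh G a, c in nbh G a & b != c] in
  Graph (gV G) ((gE G :\: T) :|: (T :\: gE G)).

Definition del (G : graph U) (a : U) : graph U :=
  Graph (gV G :\ a) [set e in gE G | a \notin e].

Definition lcs (G : graph U) (s : seq U) : graph U := foldl lc G s.

(* Generalized tree-like graph with parameters n_o, k_c, hat k_b;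
   orchestrators o 0, ..., o (n_o - 1) (0-based indexing), client set Vc. *)
Definition gen_tree_like (G : graph U) (no kc kb : nat) (o : nat -> U)
    (Vc : {set U}) : Prop :=
  [/\ simple_graph G, 1 <= no & 1 <= kb] /\
  {in [pred i | i < no] &, injective o} /\
  (gV G = [set o (val i) | i in 'I_no] :|: Vc /\ (forall i, i < no -> o i \notin Vc)) /\
  (forall e, e \in gE G ->
               exists2 i, i < no & exists2 c, c \in Vc & e = [set o i; c]) /\
  (forall i, i < no -> #|nbh G (o i)| = kc) /\
  (forall i, i.+1 < no -> #|nbh G (o i) :&: nbh G (o i.+1)| = kb) /\
  (forall i j, j < no -> i.+2 <= j -> nbh G (o i) :&: nbh G (o j) = set0) /\
  (forall c, c \in Vc -> exists2 i, i < no & c \in nbh G (o i)).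

Definition enhanced_ring (G : graph U) (no : nat) (o : nat -> U) : graph U :=
  foldl (fun H i => del (lc H (o i)) (o i)) G (iota 0 no).

End Graphs.

Definition relabel (U' U : finType) (f : U' -> U) (G : graph U') : graph U :=
  Graph (f @: gV G) [set f @: (e : {set U'}) | e in gE G].

Definition kbar (no kb : nat) : nat :=
  if 3 <= no then 2 * kb else if no == 2 then kb else 0.

From mathcomp Require Import all_boot zify.
Set Implicit Arguments. Unset Strict Implicit. Unset Printing Implicit Defensive.

(* The orchestrators are pairwise non-adjacent, so a local complementation at
   one of them leaves the neighbourhoods of the others unchanged and simply
   toggles all pairs inside its own neighbourhood.  Hence the edges of the
   enhanced ring graph are the pairs of clients lying in an odd number of the
   N(o_i) (every original edge meets some o_i and is deleted), and the edges of
   T' after complementing at all o'_i are its own edges plus the pairs lying in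
   an odd number of the N(o'_i).
   Classify vertices by the list of indices i whose (closed) neighbourhood
   contains them.  The neighbourhoods N(o_i) in T and the closed neighbourhoods
   {o'_i} u N(o'_i) in T' are chains with the same sizes and overlaps, so each
   class has the same size on both sides and there is a bijection f with
   N(o_i) = f(o'_i) |: f(N(o'_i)).  The pairs inside N(o_i) are then the pairs
   inside f(N(o'_i)) plus the star at f(o'_i), i.e. the image of the edges of
   T' at o'_i; comparing parities gives the equality of edge sets. *)

Lemma foldl_map (A B C : Type) (F : A -> B -> A) (g : C -> B) z s :
  foldl F z (map g s) = foldl (fun z x => F z (g x)) z s.
Proof. by elim: s z => //= x s IH z. Qed.

Lemma count_eq_has (I : eqType) (P : pred I) (s : seq I) :
  uniq s -> {in s &, forall i j, P i -> P j -> i = j} -> count P s = has P s.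
Proof.
elim: s => //= i s IH /andP[i_s uniq_s] P_uniq.
rewrite IH //; last by move=> j l js ls; apply: P_uniq; rewrite inE ?js ?ls orbT.
case Pi: (P i) => //=; case: hasP => // -[j js Pj].
by move: i_s; rewrite (P_uniq i j) ?inE ?eqxx ?js ?orbT.
Qed.

Lemma fiberwise_bijection (A B : finType) (K : eqType) (DA : {set A}) (DB : {set B})
    (kA : A -> K) (kB : B -> K) (y0 : B) :
  (forall k, #|[set x in DA | kA x == k]| = #|[set y in DB | kB y == k]|) ->
  exists g : A -> B,
    [/\ {in DA &, injective g}, g @: DA = DB & {in DA, forall x, kB (g x) = kA x}].
Proof.
move=> card_fibers.
(* [y0] is only the default value of [nth]; it is never reached on [DA]. *)
pose FA k := [set x in DA | kA x == k]; pose FB k := [set y in DB | kB y == k].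
pose g x := nth y0 (enum (FB (kA x))) (index x (enum (FA (kA x)))).
have FA_kA x : x \in DA -> x \in FA (kA x) by rewrite inE eqxx andbT.
have idx_lt x : x \in DA -> index x (enum (FA (kA x))) < size (enum (FB (kA x))).
  by move=> /FA_kA xF; rewrite -cardE -card_fibers cardE index_mem mem_enum.
have gFB x : x \in DA -> g x \in FB (kA x) by move=> /idx_lt; rewrite -mem_enum; apply: mem_nth.
have gK : {in DA, forall x, kB (g x) = kA x} by move=> x /gFB; rewrite inE => /andP[_ /eqP].
have g_inj : {in DA &, injective g}.
  move=> x y xD yD gxy; have kxy : kA x = kA y by rewrite -gK // gxy gK.
  have yF : y \in FA (kA x) by rewrite kxy FA_kA.
  move: gxy; rewrite /g -kxy => /eqP; rewrite nth_uniq ?enum_uniq ?idx_lt //; last first.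
    by move: (idx_lt y yD); rewrite kxy.
  by move/eqP/(congr1 (nth x (enum (FA (kA x))))); rewrite !nth_index ?mem_enum ?FA_kA.
exists g; split=> //; apply/setP => y; apply/imsetP/idP => [[x xD ->]|yD].
  by have := gFB x xD; rewrite inE => /andP[].
have gFA : g @: FA (kB y) \subset FB (kB y).
  by apply/subsetP => _ /imsetP[x xF ->]; case/setIdP: xF => xD /eqP <-; apply: gFB.
have /imsetP[x xF ->] : y \in g @: FA (kB y).
  have := subset_cardP _ gFA; rewrite card_in_imset; last first.
    by move=> x z /setIdP[xD _] /setIdP[zD _]; apply: g_inj.
  by move=> /(_ (card_fibers _))->; rewrite inE yD eqxx.
by exists x => //; case/setIdP: xF.
Qed.

Section Graphs.
Variable U : finType.
Implicit Types (G : graph U) (a b x : U) (S M : {set U}) (e : {set U}) (s : seq U).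

Lemma graph_ext G1 G2 : gV G1 = gV G2 -> gE G1 =i gE G2 -> G1 = G2.
Proof. by case: G1 G2 => V E [V' E'] /= -> /setP ->. Qed.

Definition clique_edges S : {set {set U}} := [set e : {set U} | (#|e| == 2) && (e \subset S)].

Definition star_edges a M : {set {set U}} := [set [set a; x] | x in M].

Lemma clique_edgesE S : [set [set b; c] | b in S, c in S & b != c] = clique_edges S.
Proof.
apply/setP => e; rewrite inE; apply/imset2P/andP => [[b c bS]|[/cards2P[b [c [bc ->]]]]].
  rewrite inE => /andP[cS bc] ->; rewrite cards2 bc; split=> //.
  by apply/subsetP => x /set2P[] ->.
move=> /subsetP bcS; exists b c => //; first exact/bcS/set21.
by rewrite inE bc andbT bcS ?set22.
Qed.

Lemma mem_clique_edges S e x : e \in clique_edges S -> x \in e -> x \in S.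
Proof. by rewrite inE => /andP[_ /subsetP]; apply. Qed.

Lemma in_lc G a e : (e \in gE (lc G a)) = (e \in gE G) (+) (e \in clique_edges (nbh G a)).
Proof.
rewrite /lc /= clique_edgesE in_setU !in_setD.
by case: (e \in gE G); case: (e \in clique_edges _).
Qed.

Lemma in_del G a e : (e \in gE (del G a)) = (a \notin e) && (e \in gE G).
Proof. by rewrite inE andbC. Qed.

Lemma in_nbh G a b : (b \in nbh G a) = ([set a; b] \in gE G).
Proof. exact: in_set. Qed.

Lemma nbh_lc G a x : x \notin nbh G a -> nbh (lc G a) x = nbh G x.
Proof.
move=> xNa; apply/setP => b; rewrite !in_nbh in_lc.
suff /negPf-> : [set x; b] \notin clique_edges (nbh G a) by rewrite addbF.
by apply: contra xNa => /mem_clique_edges; apply; rewrite !inE eqxx.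
Qed.

Lemma nbh_del G a x : a \notin nbh G x -> x != a -> nbh (del G a) x = nbh G x.
Proof.
move=> aNx xa; apply/setP => b; rewrite !in_nbh in_del !inE negb_or eq_sym xa /=.
by case: eqP => // <-; rewrite -in_nbh (negPf aNx).
Qed.

Lemma lcs_graph G s : {in s &, forall a b, b \notin nbh G a} ->
  gV (lcs G s) = gV G /\
  forall e, (e \in gE (lcs G s)) =
    (e \in gE G) (+) odd (count (fun a => e \in clique_edges (nbh G a)) s).
Proof.
rewrite /lcs; elim: s G => [|a s IH] G /= indep; first by split=> // e; rewrite addbF.
have nbhE : {in s, forall b, nbh (lc G a) b = nbh G b}.
  by move=> b bs; apply: nbh_lc; apply: indep; rewrite inE ?eqxx ?bs ?orbT.
have indep' : {in s &, forall b c, c \notin nbh (lc G a) b}.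
  by move=> b c bs cs; rewrite nbhE //; apply: indep; rewrite inE ?bs ?cs orbT.
have [-> IHE] := IH _ indep'.
split=> // e; rewrite IHE (eq_in_count (a2 := fun b => e \in clique_edges (nbh G b))).
  by rewrite in_lc oddD oddb addbA.
by move=> b /nbhE ->.
Qed.

Definition lc_del G a := del (lc G a) a.

Lemma foldl_lc_del_graph G s : uniq s -> {in s &, forall a b, b \notin nbh G a} ->
  gV (foldl lc_del G s) = [set x in gV G | x \notin s] /\
  forall e, (e \in gE (foldl lc_del G s)) =
    [&& e \in gE G & all (fun a => a \notin e) s]
    (+) odd (count (fun a => e \in clique_edges (nbh G a)) s).
Proof.
elim: s G => [|a s IH] G /=.
  by move=> _ _; split=> [|e]; [apply/setP => x; rewrite !inE andbT | rewrite andbT addbF].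
move=> /andP[a_s uniq_s] indep.
have indep_s : {in s &, forall b c, c \notin nbh G b}.
  by move=> b c bs cs; apply: indep; rewrite inE ?bs ?cs orbT.
have nbhE : {in s, forall b, nbh (lc_del G a) b = nbh G b}.
  move=> b bs; have b_a : b \notin nbh G a by apply: indep; rewrite inE ?bs ?eqxx ?orbT.
  have a_b : a \notin nbh G b by apply: indep; rewrite inE ?bs ?eqxx ?orbT.
  by rewrite /lc_del nbh_del ?nbh_lc //; apply: contraNneq a_s => <-.
have indep' : {in s &, forall b c, c \notin nbh (lc_del G a) b}.
  by move=> b c bs cs; rewrite nbhE //; apply: indep_s.
have [-> IHE] := IH _ uniq_s indep'.
split=> [|e].
  by apply/setP => x; rewrite !inE negb_or andbA [_ && (x != a)]andbC.
rewrite IHE (eq_in_count (a2 := fun b => e \in clique_edges (nbh G b))); last first.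
  by move=> b /nbhE ->.
rewrite in_del in_lc oddD oddb.
case Ce: (e \in clique_edges (nbh G a)); last by rewrite !addbF andbA [_ && (a \notin e)]andbC.
have a_e : a \notin e.
  by apply: contra (mem_clique_edges Ce) _; apply: indep; rewrite inE eqxx.
have all_s : all (fun b => b \notin e) s.
  apply/allP => b bs; apply: contra (mem_clique_edges Ce) _.
  by apply: indep; rewrite inE ?bs ?eqxx ?orbT.
by rewrite a_e all_s !andbT addbA; case: (e \in gE G).
Qed.

Lemma clique_edgesU1 a M : a \notin M ->
  clique_edges (a |: M) = clique_edges M :|: star_edges a M.
Proof.
move=> aM; apply/setP => e; rewrite in_setU; apply/idP/orP.
  rewrite inE => /andP[/cards2P[b [c [bc ->]]] /subsetP bcS].
  have [bM|bM] := boolP (b \in M); have [cM|cM] := boolP (c \in M).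
  - by left; rewrite inE cards2 bc /=; apply/subsetP => x /set2P[] ->.
  - have ca : c = a by move: (bcS c (set22 b c)); rewrite !inE (negPf cM) orbF => /eqP.
    by right; apply/imsetP; exists b; rewrite // ca setUC.
  - have ba : b = a by move: (bcS b (set21 b c)); rewrite !inE (negPf bM) orbF => /eqP.
    by right; apply/imsetP; exists c; rewrite // ba.
  - have ba : b = a by move: (bcS b (set21 b c)); rewrite !inE (negPf bM) orbF => /eqP.
    have ca : c = a by move: (bcS c (set22 b c)); rewrite !inE (negPf cM) orbF => /eqP.
    by move: bc; rewrite ba ca eqxx.
case=> [|/imsetP[x xM ->]]; rewrite !inE.
  by move=> /andP[-> eM]; rewrite (subset_trans eM) ?subsetU1.
have ax : a != x by apply: contraNneq aM => ->.
by rewrite cards2 ax; apply/subsetP => y /set2P[] ->; rewrite !inE ?eqxx ?xM ?orbT.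
Qed.

Lemma odd_count_clique_edgesU1 (I : eqType) (s : seq I) (c : I -> U) (M : I -> {set U}) e :
  uniq s -> {in s &, forall i j, c i \notin M j} -> {in s &, injective c} ->
  odd (count (fun i => e \in clique_edges (c i |: M i)) s) =
  has (fun i => e \in star_edges (c i) (M i)) s
  (+) odd (count (fun i => e \in clique_edges (M i)) s).
Proof.
move=> uniq_s cNM c_inj.
pose C i := e \in clique_edges (M i); pose S i := e \in star_edges (c i) (M i).
have star_c i : S i -> c i \in e by case/imsetP=> x _ ->; apply: set21.
have CS0 : {in s, forall i, C i && S i = false}.
  by move=> i si; apply/andP => -[/mem_clique_edges Ce /star_c/Ce]; apply/negP/cNM.
rewrite (eq_in_count (a2 := predU C S)); last first.
  by move=> i si; rewrite /= clique_edgesU1 ?cNM // in_setU.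
have := count_predUI C S s.
rewrite (eq_in_count (a1 := predI C S) (a2 := pred0)) ?count_pred0; last exact: CS0.
rewrite addn0 => ->; rewrite oddD addbC (count_eq_has uniq_s) ?oddb //.
move=> i j si sj /star_c ci_e /imsetP[y yM exy].
have /set2P[/c_inj -> //|ciy] : c i \in [set c j; y] by rewrite -exy.
by move: (cNM i j si sj); rewrite ciy yM.
Qed.

End Graphs.

Section Relabel.
Variables (U U' : finType) (f : U' -> U).
Implicit Types (G : graph U') (a : U') (M : {set U'}).

Lemma relabel_nbh G a : simple_graph G -> {in gV G &, injective f} -> a \in gV G ->
  nbh (relabel f G) (f a) = f @: nbh G a.
Proof.
move=> simG f_inj aV; apply/setP => b; rewrite in_nbh; apply/imsetP/imsetP => [[e eG]|].
  have [/eqP/cards2P[x [y [xy exy]]] /subsetP eV] := simG e eG; rewrite {e}exy in eG eV *.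
  have [xV yV] : x \in gV G /\ y \in gV G by rewrite !eV ?set21 ?set22.
  have fxy : f x != f y by apply: contraNneq xy => /(f_inj _ _ xV yV)/eqP.
  rewrite imsetU1 imset_set1 => fE.
  have /set2P[fxa|fya] : f a \in [set f x; f y] by rewrite -fE set21.
    rewrite -(f_inj _ _ aV xV fxa) in eG; exists y; rewrite ?in_nbh //.
    have /set2P[fya|->] // : f y \in [set f a; b] by rewrite fE set22.
    by move: fxy; rewrite fya fxa eqxx.
  rewrite -(f_inj _ _ aV yV fya) setUC in eG; exists x; rewrite ?in_nbh //.
  have /set2P[fxa|->] // : f x \in [set f a; b] by rewrite fE set21.
  by move: fxy; rewrite fxa fya eqxx.
case=> y yN ->; exists [set a; y]; first by rewrite -in_nbh.
by rewrite imsetU1 imset_set1.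
Qed.

Lemma imset_star_edges a M :
  [set f @: (e : {set U'}) | e in star_edges a M] = star_edges (f a) (f @: M).
Proof.
by rewrite /star_edges -!imset_comp; apply: eq_imset => x /=; rewrite imsetU1 imset_set1.
Qed.

Lemma relabel_star_edges G (I : eqType) (s : seq I) (c : I -> U') (M : I -> {set U'}) :
  (forall e, (e \in gE G) = has (fun i => e \in star_edges (c i) (M i)) s) ->
  forall e, (e \in gE (relabel f G)) = has (fun i => e \in star_edges (f (c i)) (f @: M i)) s.
Proof.
move=> GE e; apply/imsetP/hasP => [[e' /[!GE] /hasP[i si e'S] ->]|[i si]].
  by exists i; rewrite // -imset_star_edges imset_f.
by rewrite -imset_star_edges => /imsetP[e' e'S ->]; exists e'; rewrite // GE; apply/hasP; exists i.
Qed.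

End Relabel.

Definition set_chain (T : finType) (no k kb : nat) (N : nat -> {set T}) : Prop :=
  [/\ forall i, i < no -> #|N i| = k,
      forall i, i.+1 < no -> #|N i :&: N i.+1| = kb
    & forall i j, j < no -> i.+2 <= j -> N i :&: N j = set0].

Section SetChain.
Variables (T : finType) (no : nat) (N : nat -> {set T}).

Definition chain_key x := [seq i <- iota 0 no | x \in N i].
Definition chain_fiber s := [set x | chain_key x == s].
Definition chain_support := [set x | chain_key x != [::]].

Lemma mem_chain_key x i : (i \in chain_key x) = (i < no) && (x \in N i).
Proof. by rewrite mem_filter mem_iota andbC. Qed.

Lemma chain_supportP x : reflect (exists2 i, i < no & x \in N i) (x \in chain_support).
Proof.
rewrite inE -has_filter; apply: (iffP hasP) => -[i].
  by rewrite mem_iota => /andP[_ hi] xi; exists i.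
by move=> hi xi; exists i; rewrite ?mem_iota.
Qed.

Lemma chain_support_fiber s :
  [set x in chain_support | chain_key x == s] = if s is [::] then set0 else chain_fiber s.
Proof. by apply/setP => x; case: s => [|i s]; rewrite !inE; case: eqP => // ->. Qed.

Variables (k kb : nat).
Hypothesis chainN : set_chain no k kb N.

Lemma chain_key_cases x :
  [\/ chain_key x = [::], exists2 i, i < no & chain_key x = [:: i]
    | exists2 i, i.+1 < no & chain_key x = [:: i; i.+1]].
Proof.
have [_ _ disjN] := chainN.
have adj i j : i \in chain_key x -> j \in chain_key x -> i < j -> j = i.+1.
  rewrite !mem_chain_key => /andP[_ xi] /andP[hj xj] ij.
  case: (ltnP j i.+2) => [|i2j]; first lia.
  by have /setP/(_ x) := disjN i j hj i2j; rewrite !inE xi xj.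
have in_key i : i \in chain_key x -> i < no by rewrite mem_chain_key => /andP[].
have srt : sorted ltn (chain_key x) := sorted_filter ltn_trans _ (iota_ltn_sorted 0 no).
move: adj in_key srt; case: (chain_key x) => [|i [|j [|l t]]] adj in_key /= srt.
- by constructor 1.
- by constructor 2; exists i; rewrite ?in_key ?inE.
- have ji : j = i.+1 by apply: adj; rewrite ?inE ?eqxx ?orbT //; case/andP: srt.
  by constructor 3; exists i; rewrite -?ji ?in_key // !inE eqxx orbT.
- case/and3P: srt => ij jl _.
  have li : l = i.+1 by apply: adj; rewrite ?inE ?eqxx ?orbT // (ltn_trans ij jl).
  have ji : j = i.+1 by apply: adj; rewrite ?inE ?eqxx ?orbT.
  by move: jl; rewrite li ji ltnn.
Qed.

Lemma chain_fiberI s t : s != t -> chain_fiber s :&: chain_fiber t = set0.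
Proof.
by move=> st; apply/setP => x; rewrite !inE; apply: contraNF st => /andP[/eqP <-].
Qed.

Lemma card_chain_fiber2 i : #|chain_fiber [:: i; i.+1]| = if i.+1 < no then kb else 0.
Proof.
have [_ cardI _] := chainN.
case: ifP => hi; last first.
  apply/eqP; rewrite cards_eq0; apply/eqP/setP => x; rewrite !inE.
  apply: contraFF hi => /eqP kx.
  by have := mem_chain_key x i.+1; rewrite kx !inE eqxx orbT => /esym/andP[].
rewrite -(cardI i hi); apply: eq_card => x; rewrite !inE.
apply/eqP/andP => [kx|[xi xi']].
  have mk := mem_chain_key x; rewrite kx in mk.
  by move: (mk i) (mk i.+1); rewrite !inE !eqxx orbT => /esym/andP[_ ->] /esym/andP[_ ->].
have k1 : i \in chain_key x by rewrite mem_chain_key xi ltnW.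
have k2 : i.+1 \in chain_key x by rewrite mem_chain_key hi xi'.
case: (chain_key_cases x) k1 k2 => [->|[j _ ->]|[j _ ->]] //; rewrite !inE.
  by move=> /eqP-> /eqP; lia.
by move=> /orP[/eqP->|/eqP ij] //; lia.
Qed.

Lemma card_chain_fiber1 i : i < no ->
  #|chain_fiber [:: i]| + (if 0 < i then kb else 0) + (if i.+1 < no then kb else 0) = k.
Proof.
move=> hi; have [cardN _ _] := chainN.
have card_prev : #|chain_fiber [:: i.-1; i]| = if 0 < i then kb else 0.
  case: i hi => [|i] hi; last by rewrite /= card_chain_fiber2 hi.
  apply/eqP; rewrite cards_eq0; apply/eqP/setP => x; rewrite !inE.
  by case: (chain_key_cases x) => [->|[j _ ->]|[j _ ->]]; rewrite ?eqseq_cons ?andbF.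
have splitN : N i = chain_fiber [:: i] :|: chain_fiber [:: i.-1; i] :|: chain_fiber [:: i; i.+1].
  apply/setP => x; rewrite !inE; apply/idP/idP => [xi|].
    have : i \in chain_key x by rewrite mem_chain_key hi xi.
    case: (chain_key_cases x) => [->|[j _ ->]|[j _ ->]] //; rewrite !inE.
      by move=> /eqP->; rewrite eqxx.
    by move=> /orP[]/eqP->; rewrite eqxx ?orbT.
  by move=> /orP[/orP[]|] /eqP kx; have := mem_chain_key x i;
    rewrite kx !inE eqxx ?orbT hi => /esym.
rewrite -(cardN i hi) splitN !cardsU setIUl !chain_fiberI ?setU0 ?cards0 ?subn0 -?card_prev.
- by rewrite card_chain_fiber2.
- by rewrite !eqseq_cons andbT; lia.
- by rewrite eqseq_cons andbF.
- by rewrite eqseq_cons andbF.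
Qed.

Lemma chain_fiber_shape s : s != [::] -> chain_fiber s != set0 ->
  (exists2 i, i < no & s = [:: i]) \/ (exists2 i, i.+1 < no & s = [:: i; i.+1]).
Proof.
move=> s0 /set0Pn[x]; rewrite inE => /eqP kx; move: s0; rewrite -kx.
by case: (chain_key_cases x) => [->||]; [|left|right].
Qed.

End SetChain.

Lemma set_chain_card_fiber (T1 T2 : finType) (no k kb : nat)
    (N1 : nat -> {set T1}) (N2 : nat -> {set T2}) s :
  set_chain no k kb N1 -> set_chain no k kb N2 -> s != [::] ->
  #|chain_fiber no N1 s| = #|chain_fiber no N2 s|.
Proof.
move=> chain1 chain2 s0.
have [[i hi ->]|[i hi ->]|[-> ->]] : [\/ exists2 i, i < no & s = [:: i],
    exists2 i, i.+1 < no & s = [:: i; i.+1]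
  | chain_fiber no N1 s = set0 /\ chain_fiber no N2 s = set0].
- have [E1|/(chain_fiber_shape chain1 s0)[]] := eqVneq (chain_fiber no N1 s) set0;
    [|by constructor 1|by constructor 2].
  have [E2|/(chain_fiber_shape chain2 s0)[]] := eqVneq (chain_fiber no N2 s) set0;
    [by constructor 3|by constructor 1|by constructor 2].
- by have := card_chain_fiber1 chain1 hi; have := card_chain_fiber1 chain2 hi; lia.
- by rewrite (card_chain_fiber2 chain1) (card_chain_fiber2 chain2).
- by rewrite !cards0.
Qed.

Section TreeLike.
Variables (U : finType) (G : graph U) (no kc kb : nat) (o : nat -> U) (Vc : {set U}).
Hypothesis HG : gen_tree_like G no kc kb o Vc.

Local Notation N i := (nbh G (o i)).

Lemma tl_simple : simple_graph G.
Proof. by case: HG => -[]. Qed.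

Lemma tl_o_inj : {in [pred i | i < no] &, injective o}.
Proof. by case: HG => _ []. Qed.

Lemma tl_o_notin i : i < no -> o i \notin Vc.
Proof. by case: HG => _ [_ [[_ ?] _]]; auto. Qed.

Lemma tl_nbh_sub i : i < no -> N i \subset Vc.
Proof.
case: HG => _ [_ [_ [edges _]]] hi; apply/subsetP => b; rewrite in_nbh.
case/edges=> j _ [c cV e_oc].
have /set2P[ci|<- //] : c \in [set o i; b] by rewrite e_oc set22.
by move: (tl_o_notin hi); rewrite -ci cV.
Qed.

Lemma tl_o_notin_nbh i j : i < no -> j < no -> o i \notin N j.
Proof. by move=> hi hj; apply: contra (tl_o_notin hi); apply/subsetP/tl_nbh_sub. Qed.

Lemma tl_vertices x : (x \in gV G) = (x \in [seq o i | i <- iota 0 no]) || (x \in Vc).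
Proof.
case: HG => _ [_ [[-> _] _]]; rewrite in_setU; congr (_ || _).
apply/imsetP/mapP => [[i _ ->]|[i]]; first by exists (val i); rewrite // mem_iota ltn_ord.
by rewrite mem_iota => /andP[_ hi] ->; exists (Ordinal hi).
Qed.

Lemma tl_edges e : (e \in gE G) = has (fun i => e \in star_edges (o i) (N i)) (iota 0 no).
Proof.
case: HG => _ [_ [_ [edges _]]]; apply/idP/hasP => [eG|[i _ /imsetP[x]]].
  have [i hi [c _ e_oc]] := edges e eG.
  by exists i; rewrite ?mem_iota //; apply/imsetP; exists c; rewrite // in_nbh -e_oc.
by rewrite in_nbh => ? ->.
Qed.

Lemma tl_set_chain : set_chain no kc kb (fun i => N i).
Proof. by case: HG => _ [_ [_ [_ [? [? [? _]]]]]]. Qed.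

Lemma tl_Vc_support : Vc = chain_support no (fun i => N i).
Proof.
case: HG => _ [_ [_ [_ [_ [_ [_ cover]]]]]].
apply/setP => x; apply/idP/chain_supportP => [/cover //|[i hi]].
exact/subsetP/tl_nbh_sub.
Qed.

Lemma tl_closed_nbhI i j : i < no -> j < no -> i != j ->
  (o i |: N i) :&: (o j |: N j) = N i :&: N j.
Proof.
move=> hi hj ij; apply/setP => x; rewrite !in_setI !in_setU1.
have oij : (o i == o j) = false by rewrite (inj_in_eq tl_o_inj) ?inE ?(negPf ij).
have [->|_] := eqVneq x (o i).
  by rewrite oij (negPf (tl_o_notin_nbh hi hi)) (negPf (tl_o_notin_nbh hi hj)).
have [->|_] //= := eqVneq x (o j).
by rewrite (negPf (tl_o_notin_nbh hj hi)).
Qed.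

Lemma tl_closed_set_chain : set_chain no kc.+1 kb (fun i => o i |: N i).
Proof.
have [cardN cardI disjN] := tl_set_chain.
split=> [i hi|i hi|i j hj hij].
- by rewrite cardsU1 tl_o_notin_nbh // cardN.
- by rewrite tl_closed_nbhI ?cardI ?(ltnW hi) // neq_ltn ltnSn.
- have ij : i < j := ltnW hij.
  by rewrite tl_closed_nbhI ?disjN ?(ltn_trans ij hj) ?(ltn_eqF ij).
Qed.

Lemma tl_vertices_support : gV G = chain_support no (fun i => o i |: N i).
Proof.
apply/setP => x; rewrite tl_vertices tl_Vc_support; apply/idP/chain_supportP.
  case/orP => [/mapP[i /[!mem_iota] /andP[_ hi] ->]|/chain_supportP[i hi xi]].
    by exists i; rewrite ?setU11.
  by exists i; rewrite ?setU1r.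
case=> i hi /setU1P[->|xi]; first by rewrite map_f ?mem_iota.
by apply/orP; right; apply/chain_supportP; exists i.
Qed.

Lemma tl_o_in_vertices i : i < no -> o i \in gV G.
Proof. by move=> hi; rewrite tl_vertices map_f ?mem_iota. Qed.

Lemma tl_closed_nbh_sub i : i < no -> o i |: N i \subset gV G.
Proof.
by move=> hi; apply/subsetP => x xi; rewrite tl_vertices_support; apply/chain_supportP; exists i.
Qed.

Lemma enhanced_ring_graph :
  gV (enhanced_ring G no o) = Vc /\
  forall e, (e \in gE (enhanced_ring G no o)) =
    odd (count (fun i => e \in clique_edges (N i)) (iota 0 no)).
Proof.
have in_iota i : i \in iota 0 no -> i < no by rewrite mem_iota.
have uniq_o : uniq [seq o i | i <- iota 0 no].
  by rewrite map_inj_in_uniq ?iota_uniq // => i j /in_iota hi /in_iota hj; apply: tl_o_inj.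
have indep : {in [seq o i | i <- iota 0 no] &, forall a b, b \notin nbh G a}.
  by move=> _ _ /mapP[i /in_iota hi ->] /mapP[j /in_iota hj ->]; apply: tl_o_notin_nbh.
have [V E] := foldl_lc_del_graph uniq_o indep.
rewrite /enhanced_ring -(foldl_map (@lc_del U) o) V; split=> [|e].
  apply/setP => x; rewrite inE tl_vertices.
  have [xV|] := boolP (x \in Vc); last by rewrite orbF andbN.
  rewrite orbT; apply/mapP => -[i /in_iota hi xo].
  by move: (tl_o_notin hi); rewrite -xo xV.
rewrite E count_map; case eG: (e \in gE G) => //=.
suff /negbTE-> : ~~ all (fun a => a \notin e) [seq o i | i <- iota 0 no] by [].
move: eG; rewrite tl_edges => /hasP[i /in_iota hi /imsetP[x _ ->]].
by apply/allPn; exists (o i); rewrite ?map_f ?mem_iota ?set21.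
Qed.

End TreeLike.

Section EnhancedRingRelabel.
Variables (U U' : finType) (T : graph U) (T' : graph U') (no kc kb : nat)
  (o : nat -> U) (o' : nat -> U') (Vc : {set U}) (Vc' : {set U'}).
Hypotheses (HT : gen_tree_like T no kc.+1 kb o Vc) (HT' : gen_tree_like T' no kc kb o' Vc').

Local Notation N i := (nbh T (o i)).
Local Notation N' i := (nbh T' (o' i)).

Lemma exists_nbh_bijection : exists f : U' -> U,
  [/\ {in gV T' &, injective f}, f @: gV T' = Vc
    & forall x i, x \in gV T' -> i < no -> (f x \in N i) = (x \in o' i |: N' i)].
Proof.
have card_fibers s :
    #|[set x in chain_support no (fun i => o' i |: N' i)
         | chain_key no (fun i => o' i |: N' i) x == s]| =
    #|[set y in chain_support no (fun i => N i) | chain_key no (fun i => N i) y == s]|.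
  rewrite !chain_support_fiber; case: s => [|i s]; first by rewrite !cards0.
  exact: set_chain_card_fiber (tl_closed_set_chain HT') (tl_set_chain HT) _.
have [f [f_inj f_im f_key]] := fiberwise_bijection (o 0) card_fibers.
exists f; rewrite (tl_vertices_support HT') (tl_Vc_support HT); split=> // x i xV hi.
by have := congr1 (fun s => i \in s) (f_key x xV); rewrite /= !mem_chain_key hi.
Qed.

Variable f : U' -> U.
Hypotheses (f_inj : {in gV T' &, injective f}) (f_im : f @: gV T' = Vc)
  (f_nbh : forall x i, x \in gV T' -> i < no -> (f x \in N i) = (x \in o' i |: N' i)).

Lemma nbh_image i : i < no -> N i = f (o' i) |: f @: N' i.
Proof.
move=> hi; rewrite -imsetU1; apply/setP => y; apply/idP/imsetP => [yN|[x xN ->]].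
  have /imsetP[x xV yx] : y \in f @: gV T' by rewrite f_im (subsetP (tl_nbh_sub HT hi)).
  by exists x => //; rewrite -f_nbh // -yx.
by rewrite f_nbh // (subsetP (tl_closed_nbh_sub HT' hi)).
Qed.

Lemma image_o'_notin i j : i < no -> j < no -> f (o' i) \notin f @: N' j.
Proof.
move=> hi hj; apply/imsetP => -[x xN fx].
have o'V := tl_o_in_vertices HT' hi.
have xV : x \in gV T' by apply: (subsetP (tl_closed_nbh_sub HT' hj)); rewrite setU1r.
by move: (tl_o_notin_nbh HT' hi hj); rewrite (f_inj o'V xV fx) xN.
Qed.

Lemma relabel_nbh_o' i : i < no -> nbh (relabel f T') (f (o' i)) = f @: N' i.
Proof.
by move=> hi; apply: relabel_nbh (tl_simple HT') f_inj (tl_o_in_vertices HT' hi).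
Qed.

Lemma enhanced_ring_relabel :
  enhanced_ring T no o = lcs (relabel f T') [seq f (o' i) | i <- iota 0 no].
Proof.
have in_iota i : i \in iota 0 no -> i < no by rewrite mem_iota.
have indep : {in [seq f (o' i) | i <- iota 0 no] &, forall a b, b \notin nbh (relabel f T') a}.
  move=> _ _ /mapP[i /in_iota hi ->] /mapP[j /in_iota hj ->].
  by rewrite relabel_nbh_o' // image_o'_notin.
have [erV erE] := enhanced_ring_graph HT; have [lcsV lcsE] := lcs_graph indep.
apply: graph_ext => [|e]; first by rewrite erV lcsV /= f_im.
rewrite erE lcsE count_map (relabel_star_edges f (tl_edges HT')).
rewrite (eq_in_count (a2 := fun i => e \in clique_edges (f (o' i) |: f @: N' i))); last first.
  by move=> i /in_iota hi; rewrite /= nbh_image.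
rewrite odd_count_clique_edgesU1 ?iota_uniq //.
- congr (_ (+) odd _); apply: eq_in_count => i /in_iota hi /=.
  by rewrite relabel_nbh_o'.
- by move=> i j /in_iota hi /in_iota hj; apply: image_o'_notin.
- move=> i j /in_iota hi /in_iota hj fij; apply: (tl_o_inj HT'); rewrite ?inE //.
  by apply: f_inj fij; [exact: (tl_o_in_vertices HT' hi) | exact: (tl_o_in_vertices HT' hj)].
Qed.

End EnhancedRingRelabel.

Theorem lemma6 (U U' : finType) (T : graph U) (no kc kb : nat) (o : nat -> U)
    (Vc : {set U}) (T' : graph U') (o' : nat -> U') (Vc' : {set U'}) :
  gen_tree_like T no kc kb o Vc ->
  kbar no kb < kc ->
  gen_tree_like T' no (kc - 1) kb o' Vc' ->
  exists f : U' -> U,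
    [/\ {in gV T' &, injective f},
        f @: gV T' = gV (enhanced_ring T no o)
      & enhanced_ring T no o
        = lcs (relabel f T') [seq f (o' i) | i <- iota 0 no]].
Proof.
move=> HT kbar_lt HT'.
have kc_gt0 : 0 < kc := leq_ltn_trans (leq0n _) kbar_lt.
rewrite -(prednK kc_gt0) in HT; rewrite subn1 in HT'.
have [f [f_inj f_im f_nbh]] := exists_nbh_bijection HT HT'.
exists f; split=> //; first by rewrite (enhanced_ring_graph HT).1.
exact: (enhanced_ring_relabel HT HT' f_inj f_im f_nbh).
Qed.
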